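(* In the term algebra $\mathfrak T_{L,X}$: (i) for every term $s$, the induced term function (mapping a tuple of terms, one for each variable occurring in $s$, to the result of substituting them into $s$) is injective; and (ii) consequently every justification $s\to t$ of an arrow proportion $p\to q:\!\cdot\,r\to u$ in $\mathfrak T_{L,X}$ is a characteristic justification of it.
   Context: $L$ is a language of algebras (function symbols with ranks, constants as $0$-ary symbols), $X$ a denumerable set of variables, and $\mathfrak T_{L,X}$ the term algebra with universe the set $T_{L,X}$ of $L$-terms over $X$, each $f\in L$ interpreted as $f(p_1,\dots,p_{r(f)})$. $X(s)$ is the set of variables of $s$. A justification is a pair of terms $s\to t$ with $X(t)\subseteq X(s)$. $s\to t$ is a justification of the arrow proportion $p\to q:\!\cdot\,r\to u$ (with $p,q,r,u\in T_{L,X}$) if $p=s(\mathbf o)$, $q=t(\mathbf o)$ for some tuple $\mathbf o$ of terms and $r=s(\mathbf o')$, $u=t(\mathbf o')$ for some tuple $\mathbf o'$ of terms. It is a characteristic justification of $p\to q:\!\cdot\,r\to u$ if it is a justification of it and, for every $u'\in T_{L,X}$, being a justification of $p\to q:\!\cdot\,r\to u'$ implies $u'=u$. *)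

(* Terms of a language L of algebras over the denumerable
   variable set X := nat. *)
From Stdlib Require Import List.
Import ListNotations.
Set Implicit Arguments.

Section Terms.
Variable L : Type.
Variable rank : L -> nat.   (* ranks; constants have rank 0 *)

(* raw syntax; well-formedness (arity) is the predicate [wf] below *)
Inductive term : Type :=
| Var : nat -> term
| App : L -> list term -> term.

(* membership in T_{L,X}: every symbol f is applied to exactly rank f args *)
Fixpoint wf (t : term) : Prop :=
  match t with
  | Var _ => True
  | App f ts => length ts = rank f /\
      (fix go (l : list term) : Prop :=
         match l with [] => True | u :: l' => wf u /\ go l' end) ts
  end.

Fixpoint vars (t : term) : list nat :=
  match t with
  | Var x => [x]
  | App _ ts =>
      (fix go (l : list term) : list nat :=
         match l with [] => [] | u :: l' => vars u ++ go l' end) ts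
  end.

(* s(o): substitution of the tuple o (indexed by variables) into s,
   i.e. the term function induced by s in the term algebra *)
Fixpoint subst (o : nat -> term) (t : term) : term :=
  match t with
  | Var x => o x
  | App f ts => App f (map (subst o) ts)
  end.

(* o is a tuple of terms of T_{L,X}, one for each variable of s *)
Definition tuple_for (s : term) (o : nat -> term) : Prop :=
  forall x, In x (vars s) -> wf (o x).

Definition term_fun_injective (s : term) : Prop :=
  forall o o', tuple_for s o -> tuple_for s o' ->
    subst o s = subst o' s -> forall x, In x (vars s) -> o x = o' x.

Definition is_justification (s t : term) : Prop :=
  wf s /\ wf t /\ (forall x, In x (vars t) -> In x (vars s)).

Definition justifies (s t p q r u : term) : Prop :=
  is_justification s t /\
  (exists o, tuple_for s o /\ p = subst o s /\ q = subst o t) /\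
  (exists o', tuple_for s o' /\ r = subst o' s /\ u = subst o' t).

Definition char_justifies (s t p q r u : term) : Prop :=
  justifies s t p q r u /\
  (forall u', wf u' -> justifies s t p q r u' -> u' = u).

End Terms.

(* Substitution acts on a term [s] by rebuilding [s] with the variable
   leaves replaced, so [s(o)] determines [o] on every variable of [s]:
   walking down [s(o)] along the path to an occurrence of [x] reaches [o x].
   Hence [s(o') = r = s(o'')] forces [o'] and [o''] to agree on [X(s)], and
   since [X(t)] is contained in [X(s)], also [t(o') = t(o'')]. *)
From Stdlib Require Import List.

Section TermAlgebra.
Variable L : Type.

Lemma term_nested_ind (P : term L -> Prop) :
  (forall x, P (Var L x)) ->
  (forall f ts, Forall P ts -> P (App f ts)) ->
  forall t, P t.
Proof.
  intros HVar HApp.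
  fix IH 1; intros [x | f ts].
  - apply HVar.
  - apply HApp. induction ts as [| u ts IHts]; constructor.
    + apply IH.
    + exact IHts.
Qed.

Lemma vars_App (f : L) (ts : list (term L)) :
  vars (App f ts) = flat_map (@vars L) ts.
Proof. reflexivity. Qed.

Lemma subst_App (o : nat -> term L) (f : L) (ts : list (term L)) :
  subst o (App f ts) = App f (map (subst o) ts).
Proof. reflexivity. Qed.

Lemma subst_eq_on_vars (s : term L) (o o' : nat -> term L) :
  subst o s = subst o' s -> forall x, In x (vars s) -> o x = o' x.
Proof.
  revert o o'; induction s as [y | f ts IHts] using term_nested_ind;
    intros o o' Hs x Hx.
  - destruct Hx as [<- | []]. exact Hs.
  - rewrite !subst_App in Hs. injection Hs as Hts.
    rewrite vars_App, in_flat_map in Hx. destruct Hx as [u [Hu Hxu]].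
    rewrite Forall_forall in IHts.
    apply (IHts u Hu o o'); [| exact Hxu].
    exact (proj1 map_ext_in_iff Hts u Hu).
Qed.

Lemma subst_ext_on_vars (t : term L) (o o' : nat -> term L) :
  (forall x, In x (vars t) -> o x = o' x) -> subst o t = subst o' t.
Proof.
  revert o o'; induction t as [y | f ts IHts] using term_nested_ind;
    intros o o' Hvars.
  - apply Hvars. left; reflexivity.
  - rewrite !subst_App. f_equal. apply map_ext_in. intros u Hu.
    rewrite Forall_forall in IHts. apply IHts; [exact Hu |].
    intros x Hx. apply Hvars. rewrite vars_App, in_flat_map. eauto.
Qed.

Lemma justifies_char (rank : L -> nat) (s t p q r u : term L) :
  justifies rank s t p q r u -> char_justifies rank s t p q r u.
Proof.
  intros J. split; [exact J |]. intros u' _ J'.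
  destruct J as [[_ [_ Hts]] [_ [o [_ [Hr Hu]]]]].
  destruct J' as [_ [_ [o' [_ [Hr' Hu']]]]].
  subst u u'. apply subst_ext_on_vars. intros x Hx.
  apply (subst_eq_on_vars s); [congruence | exact (Hts x Hx)].
Qed.

End TermAlgebra.

Theorem mainTheorem17 (L : Type) (rank : L -> nat) :
  (forall s : term L, wf rank s -> term_fun_injective rank s) /\
  (forall s t p q r u : term L,
     wf rank p -> wf rank q -> wf rank r -> wf rank u ->
     justifies rank s t p q r u -> char_justifies rank s t p q r u).
Proof.
  split.
  - intros s _ o o' _ _. apply subst_eq_on_vars.
  - intros s t p q r u _ _ _ _. apply justifies_char.
Qed.
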